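(* Let $H<G$ be groups and let $(G_k)_{k\in\mathbb N}$, $(H_k)_{k\in\mathbb N}$ be increasing sequences of subgroups of $G$ with $\bigcup_k G_k=G$, $\bigcup_k H_k=H$ and $H_k<G_k$. Let $K$ be a group. If $H_k<G_k$ is relatively sofic over $K$ for every $k$, then $H<G$ is relatively sofic over $K$.
   Context: $H<G$ is relatively sofic over a group $K$ if there exist a sequence of inclusions of groups $(H'_i<G'_i)_{i\in\mathbb N}$ with all $G'_i$ sofic and all $H'_i$ amenable, a free ultrafilter $\omega$ on $\mathbb N$, and an embedding $\pi:G\to\prod_\omega(G'_i\times K)$ into the algebraic ultraproduct such that $\pi(G)\cap\prod_\omega(H'_i\times K)=\pi(H)$. The algebraic ultraproduct is $\prod_\omega L_i=(\prod_i L_i)/N$ with $N=\{(g_i):\{i:g_i=1\}\in\omega\}$. *)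

From HB Require Import structures.
From mathcomp Require Import all_boot all_fingroup.
From Stdlib Require Import Reals.
Set Implicit Arguments. Unset Strict Implicit. Unset Printing Implicit Defensive.
Local Open Scope group_scope.

Definition is_subgroup (G : groupType) (H : {pred G}) : Prop :=
  1 \in H /\ (forall x y, x \in H -> y \in H -> x * y \in H) /\
  (forall x, x \in H -> x^-1 \in H).

Definition free_ultrafilter (U : (nat -> Prop) -> Prop) : Prop :=
  ~ U (fun _ => False) /\
  (forall A B, U A -> (forall i, A i -> B i) -> U B) /\
  (forall A B, U A -> U B -> U (fun i => A i /\ B i)) /\
  (forall A, U A \/ U (fun i => ~ A i)) /\
  (forall N, U (fun i => N <= i)).

(* Normalised Hamming distance on Sym(n), as a count of moved points. *)
Definition ham_count n (s t : {perm 'I_n}) : nat := #|[pred x | s x != t x]|.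

(* Sofic groups: for every finite F and eps = 1/(k+1) there is a map
   phi : G -> Sym(n) which is eps-multiplicative on F and eps-far from
   the identity on F \ {1} (Hamming distance > 1 - eps). *)
Definition sofic (G : groupType) : Prop :=
  forall (F : seq G) (k : nat), exists n (phi : G -> {perm 'I_n}),
    0 < n /\
    (forall g h, g \in F -> h \in F ->
       ham_count (phi (g * h)) (phi g * phi h) * k.+1 < n) /\
    (forall g, g \in F -> g != 1 ->
       (n - ham_count (phi g) 1) * k.+1 < n).

Definition amenable_in (G : groupType) (H : {pred G}) : Prop :=
  exists mu : (G -> Prop) -> R,
    mu (fun x => x \in H) = 1%R /\
    (forall A, (forall x, A x -> x \in H) -> (0 <= mu A)%R) /\
    (forall A B, (forall x, A x -> x \in H) -> (forall x, B x -> x \in H) ->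
       (forall x, A x -> B x -> False) ->
       mu (fun x => A x \/ B x) = (mu A + mu B)%R) /\
    (forall h A, h \in H -> (forall x, A x -> x \in H) ->
       mu (fun x => A (h^-1 * x)) = mu A).

(* The embedding pi : Gs -> prod_omega (G'_i x K) is given by a lift to the
   full product, i.e. coordinates (phi i, psi i); equalities in the algebraic
   ultraproduct are equalities on an omega-large set of indices. *)
Definition rel_sofic_in (G : groupType) (Gs Hs : {pred G}) (K : groupType) : Prop :=
  exists (G' : nat -> groupType) (H' : forall i, {pred G' i})
         (U : (nat -> Prop) -> Prop)
         (phi : forall i, G -> G' i) (psi : nat -> G -> K),
    (forall i, sofic (G' i)) /\
    (forall i, is_subgroup (H' i)) /\
    (forall i, amenable_in (H' i)) /\
    free_ultrafilter U /\
    (forall g h, g \in Gs -> h \in Gs ->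
       U (fun i => phi i (g * h) = phi i g * phi i h /\
                   psi i (g * h) = psi i g * psi i h)) /\
    (forall g h, g \in Gs -> h \in Gs -> g <> h ->
       U (fun i => phi i g <> phi i h \/ psi i g <> psi i h)) /\
    (* pi(Gs) meets prod_omega (H'_i x K) exactly in pi(Hs) *)
    (forall g, g \in Gs ->
       (U (fun i => phi i g \in H' i) <-> exists h, h \in Hs /\
          U (fun i => phi i g = phi i h /\ psi i g = psi i h))).

Definition rel_sofic (G : groupType) (H : {pred G}) (K : groupType) : Prop :=
  rel_sofic_in [pred _ : G | true] H K.

From HB Require Import structures.
From mathcomp Require Import all_boot all_fingroup.
From Stdlib Require Import Classical ClassicalEpsilon.
From Stdlib Require Cantor.

(** The witnesses of relative soficity of the [H_k < G_k] are glued along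
   an ultrafilter sum: index the approximating groups by pairs [(k, i)] and let
   a set of pairs be large when, for [W]-almost every [k], its [k]-th slice is
   large for the ultrafilter [U_k] coming with [H_k < G_k].  Every [g] lies in
   [G_k] for all large [k], so the homomorphism and injectivity conditions pass
   to the glued data.  Since the [H_k] increase, the set of pairs at which [g]
   is sent into the amenable subgroup is large exactly when [g] lies in [H]. *)

Set Implicit Arguments.
Unset Strict Implicit.
Unset Printing Implicit Defensive.

Local Open Scope group_scope.

Section FreeUltrafilter.

Variable U : (nat -> Prop) -> Prop.
Hypothesis U_free : free_ultrafilter U.

Lemma uf_mono (A B : nat -> Prop) : U A -> (forall i, A i -> B i) -> U B.
Proof. by case: U_free => _ [mono _]; apply: mono. Qed.

Lemma uf_and (A B : nat -> Prop) : U A -> U B -> U (fun i => A i /\ B i).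
Proof. by case: U_free => _ [_ [meet _]]; apply: meet. Qed.

Lemma uf_compl (A : nat -> Prop) : ~ U A -> U (fun i => ~ A i).
Proof. by case: U_free => _ [_ [_ [ultra _]]] nUA; case: (ultra A). Qed.

Lemma uf_ge (N : nat) (A : nat -> Prop) : (forall i, N <= i -> A i) -> U A.
Proof. by case: U_free => _ [_ [_ [_ cofin]]]; apply: (uf_mono (cofin N)). Qed.

Lemma uf_exists (A : nat -> Prop) : U A -> exists i, A i.
Proof.
move=> UA; apply: NNPP => noA; have [U_proper _] := U_free; apply: U_proper.
by apply: (uf_mono UA) => i Ai; apply: noA; exists i.
Qed.

Lemma uf_eventually_iff (N : nat) (A B : nat -> Prop) :
  (forall i, N <= i -> (A i <-> B i)) -> U A <-> U B.
Proof.
move=> AB; have UN : U (fun i => N <= i) by apply: (uf_ge (N := N)).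
by split=> UX; apply: (uf_mono (uf_and UX UN)) => i [Xi /AB ABi]; apply/ABi.
Qed.

Lemma uf_increasingP (A : nat -> Prop) :
  (forall i j, i <= j -> A i -> A j) -> U A <-> exists i, A i.
Proof.
move=> incrA; split; first exact: uf_exists.
by case=> i Ai; apply: (uf_ge (N := i)) => j /incrA; apply.
Qed.

End FreeUltrafilter.

(* The ultrafilter sum [W-lim_k U_k], on [nat] identified with [nat * nat] by
   Cantor pairing. *)
Definition uf_sum (W : (nat -> Prop) -> Prop) (U : nat -> (nat -> Prop) -> Prop)
    (A : nat -> Prop) : Prop :=
  W (fun k => U k (fun i => A (Cantor.to_nat (k, i)))).

Section UltrafilterSum.

Variables (W : (nat -> Prop) -> Prop) (U : nat -> (nat -> Prop) -> Prop).
Hypotheses (W_free : free_ultrafilter W) (U_free : forall k, free_ultrafilter (U k)).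

Lemma free_uf_sum : free_ultrafilter (uf_sum W U).
Proof.
have [W_proper _] := W_free.
do ![split].
- move=> Vfalse; apply: W_proper; apply: (uf_mono W_free Vfalse) => k.
  by case: (U_free k).
- move=> A B VA AB; apply: (uf_mono W_free VA) => k UA.
  by apply: (uf_mono (U_free k) UA) => i; apply: AB.
- move=> A B VA VB; apply: (uf_mono W_free (uf_and W_free VA VB)) => k [UA UB].
  exact: uf_and.
- move=> A; case: (classic (uf_sum W U A)) => [|nVA]; first by left.
  right; apply: (uf_mono W_free (uf_compl W_free nVA)) => k.
  exact: uf_compl.
- move=> N; apply: (uf_ge W_free (N := 0)) => k _.
  apply: (uf_ge (U_free k) (N := N)) => i leNi.
  apply: leq_trans leNi _; apply/leP.
  exact: PeanoNat.Nat.le_trans (PeanoNat.Nat.le_add_r i k)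
                               (Cantor.to_nat_non_decreasing k i).
Qed.

Lemma uf_sumP (A : nat -> Prop) (B : nat -> nat -> Prop) :
  (forall k i, A (Cantor.to_nat (k, i)) <-> B k i) ->
  uf_sum W U A <-> W (fun k => U k (B k)).
Proof.
move=> AB; split=> UX; apply: (uf_mono W_free UX) => k Uk;
  by apply: (uf_mono (U_free k) Uk) => i /AB.
Qed.

End UltrafilterSum.

Section InjectiveUltraproductMap.

Variables (T R : Type) (S : nat -> Type) (Gs Hs : {pred T}).
Variable U : (nat -> Prop) -> Prop.
Variables (phi : forall i, T -> S i) (psi : nat -> T -> R).
Hypothesis U_free : free_ultrafilter U.
Hypothesis pi_inj : forall g h, g \in Gs -> h \in Gs -> g <> h ->
  U (fun i => phi i g <> phi i h \/ psi i g <> psi i h).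

Lemma ultra_eq_inj g h : g \in Gs -> h \in Gs ->
  U (fun i => phi i g = phi i h /\ psi i g = psi i h) -> g = h.
Proof.
move=> Gg Gh Ueq; apply: NNPP => neq_gh.
have [i [[-> ->]]] := uf_exists U_free (uf_and U_free Ueq (pi_inj Gg Gh neq_gh)).
by case; apply.
Qed.

Lemma ultra_eq_memP g : {subset Hs <= Gs} -> g \in Gs ->
  (exists h, h \in Hs /\ U (fun i => phi i g = phi i h /\ psi i g = psi i h))
  <-> g \in Hs.
Proof.
move=> sHG Gg; split=> [[h [Hh /ultra_eq_inj -> //]]|Hg]; first exact: sHG.
by exists g; split; last by apply: (uf_ge U_free (N := 0)).
Qed.

End InjectiveUltraproductMap.

(* [ra_mem] is the intersection condition of [rel_sofic_in] in the form it
   takes once the ultraproduct map is injective, see [rel_sofic_inP]. *)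
Record rel_sofic_approx (G : groupType) (Gs Hs : {pred G}) (K : groupType) :=
  RelSoficApprox {
  ra_group : nat -> groupType;
  ra_sub : forall i : nat, {pred ra_group i};
  ra_filter : (nat -> Prop) -> Prop;
  ra_phi : forall i : nat, G -> ra_group i;
  ra_psi : nat -> G -> K;
  ra_sofic : forall i : nat, sofic (ra_group i);
  ra_subgroup : forall i : nat, is_subgroup (@ra_sub i);
  ra_amenable : forall i : nat, amenable_in (@ra_sub i);
  ra_free : free_ultrafilter ra_filter;
  ra_morph : forall g h, g \in Gs -> h \in Gs ->
    ra_filter (fun i => ra_phi i (g * h) = ra_phi i g * ra_phi i h /\
                        ra_psi i (g * h) = ra_psi i g * ra_psi i h);
  ra_inj : forall g h, g \in Gs -> h \in Gs -> g <> h ->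
    ra_filter (fun i => ra_phi i g <> ra_phi i h \/ ra_psi i g <> ra_psi i h);
  ra_mem : forall g, g \in Gs ->
    ra_filter (fun i => ra_phi i g \in @ra_sub i) <-> g \in Hs
}.

Arguments ra_sub {G Gs Hs K} r i.
Arguments ra_sofic {G Gs Hs K} r i.

Lemma rel_sofic_inP (G K : groupType) (Gs Hs : {pred G}) :
  {subset Hs <= Gs} ->
  rel_sofic_in Gs Hs K <-> inhabited (rel_sofic_approx Gs Hs K).
Proof.
move=> sHG; split.
  move=> [G' [H' [U [phi [psi [sof [sub [amen [free [morph [inj meet]]]]]]]]]]].
  constructor; apply: (@RelSoficApprox _ _ _ _ G' H' U phi psi) => // g Gg.
  exact: iff_trans (meet g Gg) (ultra_eq_memP free inj sHG Gg).
case=> [[G' H' U phi psi sof sub amen free morph inj mem]].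
exists G', H', U, phi, psi; do 6!split => //; move=> g Gg.
exact: iff_trans (mem g Gg) (iff_sym (ultra_eq_memP free inj sHG Gg)).
Qed.

Section IncreasingUnion.

Variables (G K : groupType) (Gs Hs : nat -> {pred G}) (G0 H0 : {pred G}).
Hypothesis Gs_incr : forall k l, k <= l -> {subset Gs k <= Gs l}.
Hypothesis Hs_incr : forall k l, k <= l -> {subset Hs k <= Hs l}.
Hypothesis G0E : forall g, g \in G0 <-> exists k, g \in Gs k.
Hypothesis H0E : forall h, h \in H0 <-> exists k, h \in Hs k.
Variable A : forall k, rel_sofic_approx (Gs k) (Hs k) K.
Variable W : (nat -> Prop) -> Prop.
Hypothesis W_free : free_ultrafilter W.

Let A_free k : free_ultrafilter (ra_filter (A k)) := ra_free (A k).

Lemma mem_Gs_eventually g h : g \in G0 -> h \in G0 ->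
  exists N, forall k, N <= k -> g \in Gs k /\ h \in Gs k.
Proof.
move=> /G0E[kg Gg] /G0E[kh Gh]; exists (maxn kg kh) => k.
rewrite geq_max => /andP[le_kg le_kh].
by split; [apply: Gs_incr Gg | apply: Gs_incr Gh].
Qed.

Definition union_group (j : nat) : groupType :=
  ra_group (A (Cantor.of_nat j).1) (Cantor.of_nat j).2.
Definition union_sub (j : nat) : {pred union_group j} :=
  ra_sub (A (Cantor.of_nat j).1) (Cantor.of_nat j).2.
Arguments union_sub : clear implicits.
Definition union_phi (j : nat) : G -> union_group j :=
  ra_phi (A (Cantor.of_nat j).1) (Cantor.of_nat j).2.
Definition union_psi (j : nat) : G -> K :=
  ra_psi (A (Cantor.of_nat j).1) (Cantor.of_nat j).2.
Definition union_filter : (nat -> Prop) -> Prop :=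
  uf_sum W (fun k => ra_filter (A k)).

Lemma union_filter_free : free_ultrafilter union_filter.
Proof. exact: (free_uf_sum W_free A_free). Qed.

Lemma union_morph g h : g \in G0 -> h \in G0 ->
  union_filter (fun j => union_phi j (g * h) = union_phi j g * union_phi j h /\
                         union_psi j (g * h) = union_psi j g * union_psi j h).
Proof.
move=> G0g G0h; have [N GN] := mem_Gs_eventually G0g G0h.
apply/(uf_sumP W_free A_free) => [k i|].
  by rewrite /union_phi /union_psi /union_group Cantor.cancel_of_to; apply: iff_refl.
by apply: (uf_ge W_free (N := N)) => k /GN[Gg Gh]; apply: ra_morph.
Qed.

Lemma union_inj g h : g \in G0 -> h \in G0 -> g <> h ->
  union_filter (fun j => union_phi j g <> union_phi j h \/
                         union_psi j g <> union_psi j h).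
Proof.
move=> G0g G0h neq_gh; have [N GN] := mem_Gs_eventually G0g G0h.
apply/(uf_sumP W_free A_free) => [k i|].
  by rewrite /union_phi /union_psi /union_group Cantor.cancel_of_to; apply: iff_refl.
by apply: (uf_ge W_free (N := N)) => k /GN[Gg Gh]; apply: ra_inj.
Qed.

Lemma union_mem g : g \in G0 ->
  union_filter (fun j => union_phi j g \in union_sub j) <-> g \in H0.
Proof.
move=> G0g; have [N GN] := mem_Gs_eventually G0g G0g.
apply: iff_trans (uf_sumP W_free A_free _) _ => [k i|].
  by rewrite /union_phi /union_sub /union_group Cantor.cancel_of_to; apply: iff_refl.
apply: iff_trans (uf_eventually_iff W_free (N := N) _) _.
  by move=> k /GN[Gg _]; apply: ra_mem.
apply: iff_trans (uf_increasingP W_free _) (iff_sym (H0E g)).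
by move=> k l /Hs_incr; apply.
Qed.

Definition union_approx : rel_sofic_approx G0 H0 K :=
  {| ra_group := union_group;
     ra_sub := union_sub;
     ra_filter := union_filter;
     ra_phi := union_phi;
     ra_psi := union_psi;
     ra_sofic j := ra_sofic (A (Cantor.of_nat j).1) (Cantor.of_nat j).2;
     ra_subgroup j := ra_subgroup (A (Cantor.of_nat j).1) (Cantor.of_nat j).2;
     ra_amenable j := ra_amenable (A (Cantor.of_nat j).1) (Cantor.of_nat j).2;
     ra_free := union_filter_free;
     ra_morph := union_morph;
     ra_inj := union_inj;
     ra_mem := union_mem |}.

End IncreasingUnion.

Lemma subset_chain (T : Type) (F : nat -> {pred T}) :
  (forall k, {subset F k <= F k.+1}) -> forall k l, k <= l -> {subset F k <= F l}.
Proof.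
move=> FS; apply: (@homo_leq _ F (fun X Y => {subset X <= Y})) => //.
  by move=> X x.
by move=> Y X Z sXY sYZ x /sXY /sYZ.
Qed.

Theorem lemma2p18 (G K : groupType) (H : {pred G}) (Gs Hs : nat -> {pred G}) :
  is_subgroup H ->
  (forall k, is_subgroup (Gs k)) ->
  (forall k, is_subgroup (Hs k)) ->
  (forall k, {subset Gs k <= Gs k.+1}) ->
  (forall k, {subset Hs k <= Hs k.+1}) ->
  (forall g : G, exists k, g \in Gs k) ->
  (forall h : G, h \in H <-> exists k, h \in Hs k) ->
  (forall k, {subset Hs k <= Gs k}) ->
  (forall k, rel_sofic_in (Gs k) (Hs k) K) ->
  rel_sofic H K.
Proof.
move=> _ _ _ GsS HsS Gs_cover HE sHG relsofic.
have approx k : inhabited (rel_sofic_approx (Gs k) (Hs k) K).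
  exact/rel_sofic_inP.
pose A k := epsilon (approx k) (fun _ => True).
apply/rel_sofic_inP => //; constructor.
apply: (union_approx (subset_chain GsS) (subset_chain HsS) _ HE A (ra_free (A 0))).
by move=> g; split=> // _; apply: Gs_cover.
Qed.
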